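(* Let $(H,f)$ be a vertex-weighted graph where $H$ is connected with at least one edge and $f$ is not identically zero, and let $G=L(H,f)$. Then $k(G)=1$ if one of the following holds: (i) $f(u)=f(v)=1$ for some edge $uv$ of $H$; (ii) $f(v)\le 1$ for every vertex $v$ of $H$.
   Context: All graphs are finite and simple. For a digraph $D$, its competition graph $C(D)$ has vertex set $V(D)$, two distinct vertices $u,v$ adjacent iff some vertex $x$ satisfies $(u,x),(v,x)\in A(D)$. The competition number $k(G)$ is the smallest nonnegative integer $k$ such that $G$ together with $k$ new isolated vertices is the competition graph of an acyclic digraph. For a positive integer $m$, $CP(m)$ is the complete multipartite graph with $m$ parts each of size two ($CP(1)$ is two nonadjacent vertices). A vertex-weighted graph $(H,f)$ is a graph $H$ with $f:V(H)\to\mathbb{Z}_{\ge0}$. The generalized line graph $L(H,f)$ is obtained from the disjoint union of the line graph $L(H)$ (vertex set $E(H)$, two distinct edges adjacent iff they share an endpoint) and the graphs $Q_v:=CP(f(v))$ for each $v$ with $f(v)>0$, by adding all edges between every vertex of $Q_v$ and every $e\in E(H)$ incident to $v$. *)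

From mathcomp Require Import all_boot.
Set Implicit Arguments. Unset Strict Implicit. Unset Printing Implicit Defensive.

Definition simple_graph (T : finType) (g : rel T) : Prop :=
  symmetric g /\ irreflexive g.

(* A digraph D on a finType is a relation (arc set); it is acyclic iff it has
   no directed cycle (loops included). *)
Definition acyclic (T : finType) (a : rel T) : Prop :=
  ~ (exists x y, a x y /\ connect a y x).

Definition add_isolated (T : finType) (g : rel T) (k : nat) : rel (T + 'I_k) :=
  fun x y => match x, y with inl u, inl v => g u v | _, _ => false end.

Definition is_competition_graph_of (T : finType) (g : rel T) (a : rel T) : Prop :=
  forall u v, u != v -> g u v = [exists x, a u x && a v x].

Definition comp_ok (T : finType) (g : rel T) (k : nat) : Prop :=
  exists a : rel (T + 'I_k), acyclic a /\ is_competition_graph_of (@add_isolated T g k) a.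

Definition competition_number_is (T : finType) (g : rel T) (k : nat) : Prop :=
  comp_ok g k /\ forall j, j < k -> ~ comp_ok g j.

Definition hedge (V : finType) (h : rel V) : predArgType :=
  {e : {set V} | [exists u, exists v, h u v && (e == [set u; v])]}.

(* Vertices of Q_v = CP(f v): pairs (i, b), i < f v the part, b in the part. *)
Definition cpvert (V : finType) (f : V -> nat) : predArgType :=
  {v : V & ('I_(f v) * bool)%type}.

Definition glg_vert (V : finType) (h : rel V) (f : V -> nat) : predArgType :=
  (hedge h + cpvert f)%type.

Definition glg_adj (V : finType) (h : rel V) (f : V -> nat) : rel (glg_vert h f) :=
  fun x y =>
    match x, y with
    | inl e, inl e' => (e != e') && (val e :&: val e' != set0)
    | inl e, inr q => tag q \in val e
    | inr q, inl e => tag q \in val e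
    | inr q, inr q' =>
        (tag q == tag q') && (nat_of_ord (tagged q).1 != nat_of_ord (tagged q').1)
    end.

(* The competition number is at least 1 because L(H,f) has no isolated
   vertex, while a sink of an acyclic digraph has no competitor.

   For the upper bound we rank the vertices of L(H,f) and one new vertex and
   give every vertex a clique of lower-ranked vertices, its predators, such
   that these cliques cover all edges. Each edge of L(H,f) lies in a star of
   some x in H: the edges at x plus one vertex from each of some parts of Q_x.
   Take an edge ur with f(r) = 1 and f(u) <= 1, where f(u) = 1 if some weight
   exceeds 1, and list V(H) so that it ends with u, r and every vertex but r
   has a later neighbour, its parent. The tree edge joining a vertex to its
   parent preys on the star of edges at the preceding vertex. For a weighted
   x, a few stars cover the edges inside Q_x: all parts true; for f(x) = 1
   all parts false; otherwise only the last, or only the second-to-last part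
   true, all but the last two parts true, and "prefix" stars taking one value
   on the parts before j and the other one at j. They are cheap enough to be
   paid for by Q_x itself, except the first two, which the vertices (0,F) and
   (1,F) of the next weighted vertex pay for. The edge ur, Q_u, Q_r and the
   new vertex close the chain. *)

From mathcomp Require Import all_boot.
From mathcomp Require Import zify.
Set Implicit Arguments. Unset Strict Implicit. Unset Printing Implicit Defensive.

Lemma acyclic_of_rank (T : finType) (a : rel T) (rk : T -> nat) :
  (forall x y, a x y -> rk x < rk y) -> acyclic a.
Proof.
move=> rk_lt [x [y [axy /connectP [p pth Ex]]]].
have: rk y <= rk (last y p).
  elim: p y pth {axy Ex} => [|z p IHp] y //= /andP [ayz pz].
  exact: leq_trans (ltnW (rk_lt _ _ ayz)) (IHp _ pz).
by rewrite -Ex leqNgt rk_lt.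
Qed.

Lemma acyclic_sink (T : finType) (a : rel T) (x0 : T) :
  acyclic a -> exists x, forall y, ~~ a x y.
Proof.
move=> ac; pose reach x := #|[set y | connect a x y]|.
have [x _ reach_min] := arg_minnP reach (erefl (predT x0)).
exists x => y; apply/negP => axy.
suff: reach y < reach x by rewrite ltnNge reach_min.
apply/proper_card/properP; split.
  by apply/subsetP => z; rewrite !inE; apply: connect_trans (connect1 axy).
exists x; rewrite !inE ?connect0 //.
by apply/negP => cyx; apply: ac; exists x, y.
Qed.

Lemma not_comp_ok0 (T : finType) (g : rel T) (x0 : T) :
  (forall x, exists2 y, y != x & g x y) -> ~ comp_ok g 0.
Proof.
move=> no_isolated [a [ac cg]].
have [[s|[]//] s_sink] := acyclic_sink (inl x0) ac.
have [y ys gsy] := no_isolated s.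
have /existsP [z /andP [asz _]] : [exists z, a (inl s) z && a (inl y) z].
  by rewrite -cg //= eq_sym.
by move: (s_sink z); rewrite asz.
Qed.

(* The members of [C y] are the predators of [y]. *)
Lemma comp_ok1_of_clique_cover (T : finType) (g : rel T)
    (C : T + 'I_1 -> {set T}) (rk : T + 'I_1 -> nat) :
  (forall y t, t \in C y -> rk (inl t) < rk y) ->
  (forall y t1 t2, t1 \in C y -> t2 \in C y -> t1 != t2 -> g t1 t2) ->
  (forall t1 t2, t1 != t2 -> g t1 t2 -> exists y, (t1 \in C y) && (t2 \in C y)) ->
  comp_ok g 1.
Proof.
move=> C_rank C_clique C_cover.
pose a (y1 y2 : T + 'I_1) := if y1 is inl t then t \in C y2 else false.
exists a; split; first by apply: (acyclic_of_rank (rk := rk)) => -[t|//] y; apply: C_rank.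
move=> [t1|?] [t2|?] //= ne; try by apply/esym/existsP => -[y]; rewrite ?andbF.
apply/idP/existsP => [/(C_cover _ _ ne) [y Cy]|[y /andP [C1 C2]]]; first by exists y.
exact: C_clique C1 C2 ne.
Qed.

Lemma connect_cross (T : finType) (g : rel T) (P : pred T) x y :
  connect g x y -> ~~ P x -> P y -> exists c d, [/\ ~~ P c, P d & g c d].
Proof.
move=> /connectP [p + ->] {y}.
elim: p x => [|z p IHp] x /=; first by move=> _ /negPf ->.
move=> /andP [gxz pz] nPx.
by case Pz: (P z); [exists x, z | apply: IHp; rewrite ?Pz].
Qed.

Lemma connect_has_neighbour (T : finType) (g : rel T) :
  (forall x y, connect g x y) -> (exists a b, g a b) -> forall c, exists d, g c d.
Proof.
move=> conn [a [b gab]] c.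
have [->|ca] := eqVneq c a; first by exists b.
have nPc : ~~ predC1 c c by rewrite /= eqxx.
have Pa : predC1 c a by rewrite /= eq_sym.
have [c' [d [/negPn/eqP-> _ gcd]]] := connect_cross (conn c a) nPc Pa.
by exists d.
Qed.

Definition rooted_order (T : eqType) (g : rel T) (r : T) (s : seq T) :=
  forall y, y \in s -> y != r -> exists2 z, z \in s & g y z && (index y s < index z s).

Lemma rooted_order_cons (T : eqType) (g : rel T) (r c d : T) (s : seq T) :
  c \notin s -> d \in s -> g c d -> rooted_order g r s -> rooted_order g r (c :: s).
Proof.
move=> cs ds gcd ord_s y; rewrite inE => /predU1P [->|ys] yr.
  have cd : (c == d) = false by apply: contraNF cs => /eqP->.
  by exists d; rewrite ?inE ?ds ?orbT //= gcd eqxx cd.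
have [z zs /andP [gyz lt]] := ord_s y ys yr.
have cy : (c == y) = false by apply: contraNF cs => /eqP->.
have cz : (c == z) = false by apply: contraNF cs => /eqP->.
by exists z; rewrite ?inE ?zs ?orbT //= gyz cy cz.
Qed.

Lemma exists_rooted_order (T : finType) (g : rel T) (u r : T) :
  (forall x y, connect g x y) -> g u r -> u != r ->
  exists s, [/\ uniq s, forall x, x \in s, rooted_order g r s & exists s', s = s' ++ [:: u; r]].
Proof.
move=> conn gur ur.
suff grow k s : size s + k = #|T| -> uniq s -> rooted_order g r s ->
    (exists s', s = s' ++ [:: u; r]) ->
  exists t, [/\ uniq t, forall x, x \in t, rooted_order g r t & exists t', t = t' ++ [:: u; r]].
  apply: (grow (#|T| - 2) [:: u; r]) => //=; last by exists [::].
  - by apply: subnKC; have := max_card [set u; r]; rewrite cards2 ur.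
  - by rewrite inE ur.
  - move=> y; rewrite !inE => /orP [/eqP->|/eqP->]; last by rewrite eqxx.
    by exists r => //; rewrite ?inE ?eqxx ?orbT //= gur eqxx (negbTE ur).
elim: k s => [|k IHk] s size_s uniq_s ord_s [s' s_end].
  exists s; split => //; last by exists s'.
  apply/subset_cardP; last by rewrite subset_predT.
  by rewrite (card_uniqP uniq_s) -size_s addn0.
have [x xs] : exists x, x \notin s.
  apply/existsP; rewrite -negb_forall; apply/negP => /forallP s_all.
  have := uniq_leq_size (enum_uniq T) (fun y _ => s_all y).
  by rewrite -cardE -size_s; lia.
have rs : r \in s by rewrite s_end mem_cat !inE eqxx !orbT.
have [c [d [cs ds gcd]]] := connect_cross (P := mem s) (conn x r) xs rs.
apply: (IHk (c :: s)); first by rewrite /= addSnnS.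
- by rewrite /= cs.
- exact: (rooted_order_cons cs ds gcd ord_s).
- by exists (c :: s'); rewrite s_end.
Qed.

Section GeneralizedLineGraph.
Variables (V : finType) (h : rel V) (f : V -> nat).
Local Notation GV := (glg_vert h f).

Lemma hedge_of_proof a b :
  h a b -> [exists u, exists v, h u v && ([set a; b] == [set u; v])].
Proof. by move=> hab; apply/existsP; exists a; apply/existsP; exists b; rewrite hab eqxx. Qed.

Definition hedge_of a b (hab : h a b) : hedge h := Sub [set a; b] (hedge_of_proof hab).

Lemma hedge_ofE a b (hab : h a b) : val (hedge_of hab) = [set a; b].
Proof. by []. Qed.

Lemma hedgeP (e : hedge h) : exists a b, h a b /\ val e = [set a; b].
Proof. by case: e => e /= /existsP [a /existsP [b /andP [hab /eqP ->]]]; exists a, b. Qed.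

Lemma hedge_eq_end (e : hedge h) x y z :
  x \in val e -> y \in val e -> z \in val e -> x != y -> z != y -> x = z.
Proof.
have [a [b [_ ->]]] := hedgeP e; rewrite !inE.
by do 3!case/orP=> /eqP->; rewrite ?eqxx.
Qed.

Definition star (x : V) (D w : nat -> bool) : {set GV} :=
  [set y : GV | match y with
     | inl e => x \in val e
     | inr q => [&& tag q == x, D (tagged q).1 & (tagged q).2 == w (tagged q).1]
     end].

Lemma star_clique x D w (t1 t2 : GV) :
  t1 \in star x D w -> t2 \in star x D w -> t1 != t2 -> glg_adj t1 t2.
Proof.
rewrite !inE; case: t1 t2 => [e1|[x1 [i1 b1]]] [e2|[x2 [i2 b2]]] /=.
- by move=> x1 x2 ->; apply/set0Pn; exists x; rewrite inE x1 x2.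
- by move=> xe /and3P [/eqP E _ _] _; rewrite /= E.
- by move=> /and3P [/eqP E _ _] xe _; rewrite /= E.
move=> /and3P [/eqP E1 _ /eqP B1] /and3P [/eqP E2 _ /eqP B2]; subst x1 x2 b1 b2 => /=.
by rewrite eqxx; apply: contraNN => /eqP/val_inj->.
Qed.

Lemma glg_no_isolated :
  (forall x y, connect h x y) -> (exists a b, h a b) -> (exists v, 0 < f v) ->
  forall x : GV, exists2 y, y != x & glg_adj x y.
Proof.
move=> conn hex [v fv] [e|q]; last first.
  have [d hd] := connect_has_neighbour conn hex (tag q).
  by exists (inl (hedge_of hd)); rewrite //= !inE eqxx.
have [a [b [hab Ee]]] := hedgeP e.
have [fa0|fa] := posnP (f a); last first.
  by exists (inr (existT _ a (Ordinal fa, false))); rewrite //= Ee !inE eqxx.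
have [fb0|fb] := posnP (f b); last first.
  by exists (inr (existT _ b (Ordinal fb, false))); rewrite //= Ee !inE eqxx orbT.
have ve : v \notin val e.
  by rewrite Ee !inE; apply/norP; split; apply: contraTneq fv => ->; rewrite ?fa0 ?fb0.
have ae : a \in val e by rewrite Ee !inE eqxx.
have [c [d [ce de hcd]]] := connect_cross (P := mem (val e)) (conn v a) ve ae.
have ne : hedge_of hcd != e by apply: contraNneq ce => <-; rewrite hedge_ofE !inE eqxx.
exists (inl (hedge_of hcd)) => //=; rewrite eq_sym ne; apply/set0Pn.
by exists d; rewrite !inE eqxx orbT andbT.
Qed.

End GeneralizedLineGraph.

Section Construction.
Variables (V : finType) (h : rel V) (f : V -> nat) (s : seq V) (u r : V).
Hypotheses (hur : h u r) (ur : u != r).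
Hypotheses (s_uniq : uniq s) (s_all : forall x, x \in s) (s_rooted : rooted_order h r s).
Hypothesis s_end : exists s', s = s' ++ [:: u; r].
Hypotheses (fr : f r = 1) (fu : f u <= 1) (f_big : forall x, 1 < f x -> f u = 1).

Local Notation GV := (glg_vert h f).
Local Notation star := (@star V h f).

Definition nV := size s.
Definition idx x := index x s.
Definition vtx k := nth r s k.

Lemma idx_lt x : idx x < nV.
Proof. by rewrite /idx /nV index_mem. Qed.

Lemma vtx_idx x : vtx (idx x) = x.
Proof. exact: nth_index. Qed.

Lemma idx_vtx k : k < nV -> idx (vtx k) = k.
Proof. by move=> lt; rewrite /idx /vtx index_uniq. Qed.

Lemma idx_inj : injective idx.
Proof. by move=> x y E; rewrite -(vtx_idx x) E vtx_idx. Qed.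

Lemma idx_ur : [/\ idx r = nV.-1, idx u = nV.-2 & 2 <= nV].
Proof.
have [s' s_eq] := s_end; move: s_uniq.
rewrite /idx /nV s_eq cat_uniq /= !negb_or => /and4P [_ /and3P [s'u s'r _] _ _].
rewrite !index_cat size_cat /= (negbTE s'u) (negbTE s'r) eqxx (negbTE ur) eqxx.
by split; lia.
Qed.

Definition parent y := odflt r [pick z | h y z && (idx y < idx z)].

Lemma parentP y : y != r -> h y (parent y) && (idx y < idx (parent y)).
Proof.
move=> yr; rewrite /parent; case: pickP => [z //|none].
by have [z _ Hz] := s_rooted (s_all y) yr; move: (none z); rewrite Hz.
Qed.

Lemma h_parent y : y != r -> h y (parent y).
Proof. by move/parentP/andP => []. Qed.

Lemma idx_parent y : y != r -> idx y < idx (parent y).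
Proof. by move/parentP/andP => []. Qed.

Lemma parent_neq y : y != r -> parent y != y.
Proof. by move/idx_parent; apply: contraTneq => ->; rewrite ltnn. Qed.

Lemma parent_inj_on a b : a != r -> b != r -> [set a; parent a] = [set b; parent b] -> a = b.
Proof.
move=> ar br E.
have : a \in [set b; parent b] by rewrite -E !inE eqxx.
rewrite !inE => /orP [/eqP //|/eqP ab].
have : b \in [set a; parent a] by rewrite E !inE eqxx.
rewrite !inE => /orP [/eqP ba|/eqP ba]; first by move: (parent_neq br); rewrite -ab ba eqxx.
by have := idx_parent ar; have := idx_parent br; rewrite -ab -ba; lia.
Qed.

Definition ur_edge := hedge_of hur.
Definition tree_edge y (yr : y != r) : hedge h := hedge_of (h_parent yr).

(* The tree edge [{y, parent y}] gets rank [idx y + 1]; other edges rank 0. *)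
Definition edge_rank (e : hedge h) :=
  \max_(y in val e | (y != r) && (parent y \in val e)) (idx y).+1.

Lemma edge_rank_le_nV (e : hedge h) : edge_rank e <= nV.
Proof. by apply/bigmax_leqP => y _; apply: idx_lt. Qed.

Lemma edge_rank_ge (e : hedge h) y :
  y \in val e -> y != r -> parent y \in val e -> (idx y).+1 <= edge_rank e.
Proof. by move=> ye yr pe; apply: (leq_bigmax_cond y); rewrite /= ye yr pe. Qed.

Lemma edge_rank_le x (e : hedge h) : x \in val e -> edge_rank e <= (idx x).+1.
Proof.
move=> xe; apply/bigmax_leqP => y /andP [ye /andP [yr pe]].
have [->//|yx] := eqVneq y x.
have xp : x = parent y by apply: hedge_eq_end xe ye pe _ (parent_neq yr); rewrite eq_sym.
by rewrite xp; apply: ltnW; apply: idx_parent.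
Qed.

(* Weight-1 vertices come first, so that the successor of a vertex of
   weight > 1 has weight > 1 as well, hence a vertex [(1,F)]. *)
Definition weighted :=
  [seq x <- enum V | (f x == 1) && (x != u) && (x != r)] ++ [seq x <- enum V | 1 < f x].
Definition widx x := index x weighted.
Definition prev_weighted j : option V := if j is j'.+1 then Some (nth r weighted j') else None.

Lemma mem_weighted x : (x \in weighted) = ((f x == 1) && (x != u) && (x != r)) || (1 < f x).
Proof.
have xV : x \in Finite.enum V by rewrite -enumT mem_enum.
by rewrite mem_cat !mem_filter xV !andbT.
Qed.

Lemma weighted_uniq : uniq weighted.
Proof.
rewrite cat_uniq !(filter_uniq _ (enum_uniq _)) andbT /=; apply/hasPn => x.
rewrite !mem_filter => /andP [fx _]; apply/negP => /andP [/andP [/andP [/eqP f1 _] _] _].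
by rewrite f1 in fx.
Qed.

Lemma weighted_neq x : x \in weighted -> (x != u) && (x != r).
Proof.
rewrite mem_weighted => /orP [/andP [/andP [_ ->] ->] //|fx].
by apply/andP; split; apply: contraTneq fx => ->; rewrite ?fr //; case: (f u) fu => [|[|]].
Qed.

Lemma weighted_pos x : x \in weighted -> 0 < f x.
Proof. by rewrite mem_weighted => /orP [/andP [/andP [/eqP -> _] _] //|]; case: (f x). Qed.

Lemma weightedP x : 0 < f x -> x != u -> x != r -> x \in weighted.
Proof. by rewrite mem_weighted => fx -> ->; case: (f x) fx => [|[|]]. Qed.

Lemma widx_lt x : x \in weighted -> widx x < size weighted.
Proof. by rewrite /widx index_mem. Qed.

Lemma nth_widx x : x \in weighted -> nth r weighted (widx x) = x.
Proof. exact: nth_index. Qed.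

Lemma widx_nth j : j < size weighted -> widx (nth r weighted j) = j.
Proof. by move=> lt; rewrite /widx index_uniq // weighted_uniq. Qed.

Lemma weighted_big_mono j k : j < k -> k < size weighted ->
  1 < f (nth r weighted j) -> 1 < f (nth r weighted k).
Proof.
rewrite size_cat !nth_cat; set W1 := [seq x <- enum V | _] => jk k_lt.
case: ifP => [j_lt|/negbT j_ge _].
  by move/(mem_nth r): j_lt; rewrite mem_filter => /andP [/andP [/andP [/eqP -> _] _] _].
have k_ge : ~~ (k < size W1) by lia.
rewrite (negbTE k_ge); have : k - size W1 < size [seq x <- enum V | 1 < f x] by lia.
by move/(mem_nth r); rewrite mem_filter => /andP [].
Qed.

Definition fmax := \max_x f x.
Definition stride := (2 * fmax).+3.
Definition top := nV + 1 + stride * size weighted.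

(* Order of the vertices [(i, b)] of [Q_x], [m = f x] parts:
   [(0,F) (0,T) ... (m-3,T) (m-2,F) (m-1,F) (m-2,T) (m-1,T)]. *)
Definition part_rank (m i : nat) (b : bool) :=
  if i + 3 <= m then 2 * i + b
  else if i + 2 == m then (2 * m - 4) + 2 * b else (2 * m - 3) + 2 * b.

Lemma part_rank_lt x i b : part_rank (f x) i b < stride.
Proof.
have : f x <= fmax by apply: leq_bigmax.
rewrite /part_rank /stride; case: ifP => [|_]; [|case: ifP => _]; case: b => /=; lia.
Qed.

Definition star_code := option (V * (nat -> bool) * (nat -> bool)).

(* The cliques at the weighted vertex [x] paid for by the vertices [(0,F)]
   ([k = 0]) and [(1,F)] ([k = 1]) of the next weighted vertex, or, before
   the first weighted vertex, the edges at [vtx (nV - 3)]. *)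
Definition handover (k : nat) (o : option V) : star_code :=
  match o with
  | None => if (k == 0) && (3 <= nV) then Some (vtx (nV - 3), xpred0, xpred0) else None
  | Some x => if k == 0 then Some (x, xpredT, xpredT)
              else if (k == 1) && (1 < f x) then Some (x, xpredT, fun i => i + 1 == f x)
              else None
  end.

Definition prefix_code x j (c : bool) : star_code :=
  Some (x, fun k => k <= j, fun k => if k < j then c else ~~ c).

Definition part_code (x : V) (i : nat) (b : bool) : star_code :=
  let m := f x in
  if (i == 0) && ~~ b then handover 0 (prev_weighted (widx x))
  else if (1 < m) && (i == 1) && ~~ b then handover 1 (prev_weighted (widx x))
  else if (m == 1) && b then Some (x, xpredT, xpred0)
  else if (i + 2 == m) && b then Some (x, xpredT, fun k => k + 3 <= m)
  else if (i + 1 == m) && b then Some (x, xpredT, fun k => k + 2 == m)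
  else if (2 <= i) && (i + 3 <= m) then prefix_code x (i - 1) b
  else if (4 <= m) && (i + 2 == m) then prefix_code x (m - 3) false
  else if (4 <= m) && (i + 1 == m) then prefix_code x (m - 3) true
  else None.

Definition code (y : GV + 'I_1) : star_code :=
  match y with
  | inr _ => Some (r, xpredT, xpredT)
  | inl (inl e) =>
      if e == ur_edge then handover 0 (prev_weighted (size weighted)) else
      match [pick x | (val e == [set x; parent x]) && (0 < idx x) && (idx x + 3 <= nV)] with
      | Some x => Some (vtx (idx x).-1, xpred0, xpred0)
      | None => None
      end
  | inl (inr q) =>
      let x := tag q in let i := nat_of_ord (tagged q).1 in let b := (tagged q).2 in
      if x == u then
        if b then Some (u, xpredT, xpred0) else handover 1 (prev_weighted (size weighted))
      else if x == r then
        if b then Some (r, xpredT, xpred0) else Some (u, xpredT, xpredT)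
      else part_code x i b
  end.

Definition rank (y : GV + 'I_1) : nat :=
  match y with
  | inr _ => top + 5
  | inl (inl e) => if e == ur_edge then top else edge_rank e
  | inl (inr q) =>
      let x := tag q in let i := nat_of_ord (tagged q).1 in let b := (tagged q).2 in
      if x == u then top + 1 + b else if x == r then top + 3 + b
      else nV + 1 + stride * widx x + part_rank (f x) i b
  end.

Arguments rank : simpl never.

Definition clique (y : GV + 'I_1) : {set GV} :=
  if code y is Some (x, D, w) then star x D w else set0.

Lemma rank_star_lt x (D w : nat -> bool) R :
  (forall e : hedge h, x \in val e -> rank (inl (inl e)) < R) ->
  (forall q : cpvert f, tag q = x -> (tagged q).1 < f x -> D (tagged q).1 ->
     (tagged q).2 = w (tagged q).1 -> rank (inl (inr q)) < R) ->
  forall t, t \in star x D w -> rank (inl t) < R.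
Proof.
move=> rank_e rank_q [e|q]; rewrite inE; first exact: rank_e.
move=> /and3P [/eqP qx Dq /eqP wq]; apply: rank_q => //.
by case: q qx Dq wq => xq [iq bq] /= qx; subst xq.
Qed.

Lemma rank_edge_le_top (e : hedge h) : rank (inl (inl e)) <= top.
Proof. by rewrite /rank; case: ifP => // _; have := edge_rank_le_nV e; rewrite /top; lia. Qed.

Lemma rank_edge_le_nV x (e : hedge h) : x \in val e -> x != u -> x != r ->
  rank (inl (inl e)) <= nV.
Proof.
move=> xe xu xr; rewrite /rank; case: eqP => [E|_]; last exact: edge_rank_le_nV.
by move: xe; rewrite E hedge_ofE !inE (negbTE xu) (negbTE xr).
Qed.

Lemma rank_part (q : cpvert f) x : tag q = x -> x != u -> x != r ->
  rank (inl (inr q)) = nV + 1 + stride * widx x + part_rank (f x) (tagged q).1 (tagged q).2.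
Proof.
by case: q => xq [iq bq] /= qx; subst xq => xu xr; rewrite /rank /= (negbTE xu) (negbTE xr).
Qed.

Lemma rank_part_u (q : cpvert f) : tag q = u -> rank (inl (inr q)) = top + 1 + (tagged q).2.
Proof. by case: q => xq [iq bq] /= qu; subst xq; rewrite /rank /= eqxx. Qed.

Lemma rank_part_r (q : cpvert f) : tag q = r -> rank (inl (inr q)) = top + 3 + (tagged q).2.
Proof.
by case: q => xq [iq bq] /= qr; subst xq; rewrite /rank /= eqxx eq_sym (negbTE ur).
Qed.

Lemma handover_rank j k x D w : j <= size weighted ->
  handover k (prev_weighted j) = Some (x, D, w) ->
  forall t, t \in star x D w -> rank (inl t) < nV + 1 + stride * j.
Proof.
have [idx_r idx_u nV2] := idx_ur.
case: j => [|j] j_le /=.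
  case: ifP => // /andP [_ nV3] [<- <- _]; apply: rank_star_lt => [e xe|//].
  have vtx_u : vtx (nV - 3) != u by apply/eqP => E; move: idx_u; rewrite -E idx_vtx; lia.
  have vtx_r : vtx (nV - 3) != r by apply/eqP => E; move: idx_r; rewrite -E idx_vtx; lia.
  by have := rank_edge_le_nV xe vtx_u vtx_r; lia.
set y := nth r weighted j.
have /andP [yu yr] : (y != u) && (y != r) by apply/weighted_neq/mem_nth.
suff star_y D' w' : Some (y, D', w') = Some (x, D, w) ->
    forall t, t \in star x D w -> rank (inl t) < nV + 1 + stride * j.+1.
  by case: ifP => _; [|case: ifP => // _]; apply: star_y.
case=> <- _ _; apply: rank_star_lt => [e ye|q qy _ _ _].
  by have := rank_edge_le_nV ye yu yr; lia.
rewrite (rank_part qy yu yr) /y widx_nth // mulnS.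
by have := part_rank_lt (nth r weighted j) (tagged q).1 (tagged q).2; lia.
Qed.

Lemma part_code_cases x i b c : part_code x i b = Some c ->
  (exists k, handover k (prev_weighted (widx x)) = Some c) \/
  exists D w, c = (x, D, w) /\
    forall j, j < f x -> D j -> part_rank (f x) j (w j) < part_rank (f x) i b.
Proof.
rewrite /part_code; case: ifPn => [_ <-|c1]; first by left; exists 0.
case: ifPn => [_ <-|c2]; first by left; exists 1.
move=> code_c; right; move: code_c c1 c2; rewrite /prefix_code /part_rank.
case: b => /= + c1 c2;
  repeat (case: ifPn => //= ?); (move=> [<-]; do 2 eexists; split; [reflexivity|]);
  move=> j j_lt Dj; repeat (case: ifPn => /= ?); lia.
Qed.

Lemma rank_code_edge (e : hedge h) x D w : code (inl (inl e)) = Some (x, D, w) ->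
  forall t, t \in star x D w -> rank (inl t) < rank (inl (inl e)).
Proof.
have [idx_r idx_u nV2] := idx_ur.
rewrite /code; case: ifP => [/eqP-> code_e t te|e_ne].
  by have := handover_rank (leqnn _) code_e te; rewrite /rank eqxx /top; lia.
case: pickP => [y /andP [/andP [/eqP e_eq y_pos] y_idx]|//] [<- <- _].
set z := vtx (idx y).-1.
have idx_z : idx z = (idx y).-1 by rewrite idx_vtx //; have := idx_lt y; lia.
have zu : z != u by apply/eqP => E; move: idx_z; rewrite E idx_u; lia.
have zr : z != r by apply/eqP => E; move: idx_z; rewrite E idx_r; lia.
have yr : y != r by apply/eqP => E; move: y_idx; rewrite E idx_r; lia.
have rank_e : (idx y).+1 <= edge_rank e by apply: edge_rank_ge; rewrite // e_eq !inE eqxx ?orbT.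
have -> : rank (inl (inl e)) = edge_rank e by rewrite /rank e_ne.
apply: rank_star_lt => [e' ze'|//]; rewrite /rank.
case: eqP => [E|_]; first by move: ze'; rewrite E hedge_ofE !inE (negbTE zu) (negbTE zr).
by have := edge_rank_le ze'; lia.
Qed.

Lemma rank_code_part (q : cpvert f) x D w : code (inl (inr q)) = Some (x, D, w) ->
  forall t, t \in star x D w -> rank (inl t) < rank (inl (inr q)).
Proof.
case: q => y [i b].
have [y_u|yu] := eqVneq y u.
  subst y; rewrite rank_part_u //= eqxx; case: b => [[<- <- <-]|code_q t tx].
    apply: rank_star_lt => [e _|q qu _ _ wq]; first by have := rank_edge_le_top e; lia.
    by rewrite rank_part_u // wq /=; lia.
  by have := handover_rank (leqnn _) code_q tx; rewrite /top /=; lia.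
have [y_r|yr] := eqVneq y r.
  have ru : r != u by rewrite eq_sym.
  subst y; rewrite rank_part_r //= (negbTE ru) eqxx.
  case: b => -[<- <- <-]; apply: rank_star_lt => [e _|q qx _ _ wq];
    try by have := rank_edge_le_top e; lia.
  - by rewrite rank_part_r // wq /=; lia.
  - by rewrite rank_part_u // wq /=; lia.
have -> : code (inl (inr (existT _ y (i, b)))) = part_code y i b.
  by rewrite /code /=; case: eqP yu => // _; case: eqP yr.
rewrite (rank_part (q := existT _ y (i, b)) (x := y) erefl yu yr) /=.
case/part_code_cases => [[k code_q] t tx|[D' [w' [[-> -> ->] w_lt]]]].
  apply: leq_trans (handover_rank (index_size y weighted : widx y <= _) code_q tx) _.
  exact: leq_addr.
apply: rank_star_lt => [e ye|q qy q_lt Dq wq]; first by have := rank_edge_le_nV ye yu yr; lia.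
by rewrite (rank_part qy yu yr) wq; have := w_lt _ q_lt Dq; lia.
Qed.

Lemma rank_code y x D w : code y = Some (x, D, w) ->
  forall t, t \in star x D w -> rank (inl t) < rank y.
Proof.
case: y => [[e|q]|z]; [exact: rank_code_edge | exact: rank_code_part|].
case=> <- <- <-; apply: rank_star_lt => [e _|q qr _ _ wq].
  by have := rank_edge_le_top e; rewrite /rank; lia.
by rewrite rank_part_r // wq /rank /=; lia.
Qed.

Definition qvert x k (lt : k < f x) (b : bool) : GV + 'I_1 :=
  inl (inr (existT _ x (Ordinal lt, b))).

Lemma code_qvert x k (lt : k < f x) b : x != u -> x != r -> code (qvert lt b) = part_code x k b.
Proof. by move=> xu xr; rewrite /code /qvert /= (negbTE xu) (negbTE xr). Qed.

Lemma handover_paid j k c : j <= size weighted ->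
  handover k (prev_weighted j) = Some c -> exists y, code y = Some c.
Proof.
move=> j_le code_c.
have k1 : k != 0 -> exists2 y, prev_weighted j = Some y & 1 < f y /\ k = 1.
  move: code_c => + k0; case: (prev_weighted j) => [y|] /=; last by rewrite (negbTE k0).
  by rewrite (negbTE k0); case: ifP => // /andP [/eqP -> fy] _; exists y.
have [j_lt|j_ge] := ltnP j (size weighted).
  have yW : nth r weighted j \in weighted by apply: mem_nth.
  have /andP [yu yr] := weighted_neq yW.
  have [k0|k0] := eqVneq k 0.
    subst k; exists (qvert (weighted_pos yW) false).
    by rewrite code_qvert // /part_code /= widx_nth.
  have [y prev_y [fy k_1]] := k1 k0; subst k.
  have fy2 : 1 < f (nth r weighted j).
    case: j j_le j_lt prev_y {yW yu yr k1 code_c} => [//|j] _ j_lt [prev_y].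
    by apply: weighted_big_mono (ltnSn j) j_lt _; rewrite prev_y.
  by exists (qvert fy2 false); rewrite code_qvert // /part_code /= fy2 widx_nth.
have j_eq : j = size weighted by apply/eqP; rewrite eqn_leq j_le j_ge.
subst j.
have [k0|k0] := eqVneq k 0; first by subst k; exists (inl (inl ur_edge)); rewrite /code eqxx.
have [y _ [fy k_1]] := k1 k0; subst k.
have fu1 : 0 < f u by rewrite (f_big fy).
by exists (qvert fu1 false); rewrite /code /qvert /= eqxx.
Qed.

Lemma star_paid x : exists y D w, code y = Some (x, D, w).
Proof.
have [idx_r idx_u nV2] := idx_ur.
have [->|xr] := eqVneq x r; first by exists (inr ord0), xpredT, xpredT.
have [->|xu] := eqVneq x u.
  have fr0 : 0 < f r by rewrite fr.
  exists (qvert fr0 false), xpredT, xpredT.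
  by rewrite /code /qvert /= eq_sym (negbTE ur) eqxx.
have x_idx : idx x + 3 <= nV.
  have : idx x != idx r by apply: contra_neq xr => /idx_inj.
  have : idx x != idx u by apply: contra_neq xu => /idx_inj.
  by rewrite idx_r idx_u; have := idx_lt x; lia.
have [x_last|x_early] := eqVneq (idx x + 3) nV.
  have code_x : handover 0 (prev_weighted 0) = Some (x, xpred0, xpred0).
    by rewrite /= -x_last addnK vtx_idx leq_addl.
  by have [y code_y] := handover_paid (leq0n _) code_x; exists y, xpred0, xpred0.
set z := vtx (idx x).+1.
have idx_z : idx z = (idx x).+1 by rewrite idx_vtx; lia.
have zr : z != r by apply/eqP => E; move: idx_z; rewrite E idx_r; lia.
exists (inl (inl (tree_edge zr))), xpred0, xpred0.
have not_ur : tree_edge zr != ur_edge.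
  apply/eqP => E; have : z \in val (tree_edge zr) by rewrite hedge_ofE !inE eqxx.
  by rewrite E hedge_ofE !inE => /orP [] /eqP E'; move: idx_z; rewrite E' ?idx_u ?idx_r; lia.
rewrite /code (negbTE not_ur); case: pickP => [y /andP [/andP [/eqP e_eq y_pos] y_idx]|none].
  have yr : y != r by apply/eqP => E; move: y_idx; rewrite E idx_r; lia.
  have -> : y = z by apply: parent_inj_on => //; rewrite -e_eq.
  by rewrite idx_z /= vtx_idx.
by move: (none z); rewrite hedge_ofE eqxx idx_z /=; lia.
Qed.

Local Ltac eval_part_code :=
  rewrite /part_code; repeat (case: ifPn => /= ?); try (exfalso; lia); try done.

Section WeightedVertex.
Variable x : V.
Hypothesis xW : x \in weighted.

Lemma paid_all_true : exists y, code y = Some (x, xpredT, xpredT).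
Proof. by apply: (@handover_paid (widx x).+1 0); rewrite ?widx_lt //= nth_widx. Qed.

Lemma paid_last_true : 1 < f x -> exists y, code y = Some (x, xpredT, fun k => k + 1 == f x).
Proof.
by move=> fx; apply: (@handover_paid (widx x).+1 1); rewrite ?widx_lt //= nth_widx // fx.
Qed.

Lemma paid_all_false : f x = 1 -> exists y, code y = Some (x, xpredT, xpred0).
Proof.
move=> fx; have /andP [xu xr] := weighted_neq xW; have lt : 0 < f x by rewrite fx.
by exists (qvert lt true); rewrite code_qvert //; eval_part_code.
Qed.

Lemma paid_second_last_true : 1 < f x ->
  exists y, code y = Some (x, xpredT, fun k => k + 2 == f x).
Proof.
move=> fx; have /andP [xu xr] := weighted_neq xW; have lt : f x - 1 < f x by lia.
by exists (qvert lt true); rewrite code_qvert //; eval_part_code.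
Qed.

Lemma paid_head_true : 1 < f x -> exists y, code y = Some (x, xpredT, fun k => k + 3 <= f x).
Proof.
move=> fx; have /andP [xu xr] := weighted_neq xW; have lt : f x - 2 < f x by lia.
by exists (qvert lt true); rewrite code_qvert //; eval_part_code.
Qed.

Lemma paid_prefix j c : 0 < j -> j + 3 <= f x -> exists y, code y = prefix_code x j c.
Proof.
move=> j_pos j_le; have /andP [xu xr] := weighted_neq xW.
have [j_lt|j_eq] := ltnP (j + 3) (f x).
  have lt : j.+1 < f x by lia.
  by exists (qvert lt c); rewrite code_qvert //; eval_part_code; congr prefix_code; lia.
case: c.
  have lt : f x - 1 < f x by lia.
  by exists (qvert lt false); rewrite code_qvert //; eval_part_code; congr prefix_code; lia.
have lt : f x - 2 < f x by lia.
by exists (qvert lt false); rewrite code_qvert //; eval_part_code; congr prefix_code; lia.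
Qed.

End WeightedVertex.

Lemma part_paid x i b : i < f x -> exists y D w, code y = Some (x, D, w) /\ D i /\ w i = b.
Proof.
move=> i_lt; have fr0 : 0 < f r by rewrite fr.
have [x_u|xu] := eqVneq x u; first subst x.
  case: b; last by exists (qvert i_lt true), xpredT, xpred0; rewrite /code /qvert /= eqxx.
  by exists (qvert fr0 false), xpredT, xpredT; rewrite /code /qvert /= eq_sym (negbTE ur) eqxx.
have [x_r|xr] := eqVneq x r; first subst x.
  case: b; first by exists (inr ord0), xpredT, xpredT.
  by exists (qvert i_lt true), xpredT, xpred0; rewrite /code /qvert /= eq_sym (negbTE ur) eqxx.
have xW : x \in weighted by apply: weightedP => //; lia.
case: b; first by have [y code_y] := paid_all_true xW; exists y, xpredT, xpredT.
have [fx1|fx1] := eqVneq (f x) 1.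
  by have [y code_y] := paid_all_false xW fx1; exists y, xpredT, xpred0.
have fx2 : 1 < f x by lia.
have [i_last|i_last] := eqVneq (i + 1) (f x).
  have [y code_y] := paid_second_last_true xW fx2.
  by exists y, xpredT, (fun k => k + 2 == f x); split => //; split => //; apply/eqP; lia.
have [y code_y] := paid_last_true xW fx2.
by exists y, xpredT, (fun k => k + 1 == f x); split => //; split => //; apply: negbTE.
Qed.

Lemma part_pair_paid x i j b c : i < j -> j < f x ->
  exists y D w, code y = Some (x, D, w) /\ [/\ D i, D j, w i = b & w j = c].
Proof.
move=> ij j_lt; have fx2 : 1 < f x by lia.
have xu : x != u by apply: contraTneq fu => <-; lia.
have xr : x != r by apply/eqP => E; move: fr; rewrite -E; lia.
have xW : x \in weighted by apply: weightedP => //; lia.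
suff [D [w [[y code_y] Dw]]] : exists D w,
    (exists y, code y = Some (x, D, w)) /\ [/\ D i, D j, w i = b & w j = c].
  by exists y, D, w.
have [j_low|j_high] := leqP (j + 3) (f x).
  case: (b =P c) => [<-|/eqP bc].
    case: b; [exists xpredT, xpredT | exists xpredT, (fun k => k + 1 == f x)].
      by split; [apply: paid_all_true|].
    by split; [apply: paid_last_true|split => //=; apply/eqP; lia].
  exists (fun k => k <= j), (fun k => if k < j then b else ~~ b).
  split; first by apply: paid_prefix => //; lia.
  by split; rewrite /= ?ij ?ltnn ?(ltnW ij) //; case: b c bc => -[].
case: b; case: c.
- by exists xpredT, xpredT; split; [apply: paid_all_true|].
- have [i_m2|i_m2] := eqVneq (i + 2) (f x).
    exists xpredT, (fun k => k + 2 == f x).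
    by split; [apply: paid_second_last_true|split => //=; apply/eqP; lia].
  exists xpredT, (fun k => k + 3 <= f x).
  by split; [apply: paid_head_true|split => //=; lia].
- have [j_m1|j_m1] := eqVneq (j + 1) (f x).
    exists xpredT, (fun k => k + 1 == f x).
    by split; [apply: paid_last_true|split => //=; apply/eqP; lia].
  exists xpredT, (fun k => k + 2 == f x).
  by split; [apply: paid_second_last_true|split => //=; apply/eqP; lia].
- have [j_m1|j_m1] := eqVneq (j + 1) (f x); last first.
    exists xpredT, (fun k => k + 1 == f x).
    by split; [apply: paid_last_true|split => //=; apply/eqP; lia].
  have [i_m2|i_m2] := eqVneq (i + 2) (f x).
    exists xpredT, (fun k => k + 3 <= f x).
    by split; [apply: paid_head_true|split => //=; lia].
  exists xpredT, (fun k => k + 2 == f x).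
  by split; [apply: paid_second_last_true|split => //=; apply/eqP; lia].
Qed.

Lemma clique_cover (t1 t2 : GV) : t1 != t2 -> glg_adj t1 t2 ->
  exists y, (t1 \in clique y) && (t2 \in clique y).
Proof.
rewrite /clique; case: t1 t2 => [e1|[x1 [i1 b1]]] [e2|[x2 [i2 b2]]] t12 /=.
- case/andP=> _ /set0Pn [x]; rewrite inE => /andP [x1 x2].
  by have [y [D [w code_y]]] := star_paid x; exists y; rewrite code_y !inE x1 x2.
- move=> x2e; have [y [D [w [code_y [Di wi]]]]] := part_paid b2 (ltn_ord i2).
  by exists y; rewrite code_y !inE x2e eqxx Di wi eqxx.
- move=> x1e; have [y [D [w [code_y [Di wi]]]]] := part_paid b1 (ltn_ord i1).
  by exists y; rewrite code_y !inE x1e eqxx Di wi eqxx.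
case/andP=> /eqP x12 i12; subst x2.
case: (ltngtP i1 i2) => [lt12|lt21|/val_inj i12']; last by rewrite i12' eqxx in i12.
  have [y [D [w [code_y [D1 D2 w1 w2]]]]] := part_pair_paid b1 b2 lt12 (ltn_ord i2).
  by exists y; rewrite code_y !inE /= eqxx D1 D2 w1 w2 !eqxx.
have [y [D [w [code_y [D2 D1 w2 w1]]]]] := part_pair_paid b2 b1 lt21 (ltn_ord i1).
by exists y; rewrite code_y !inE /= eqxx D1 D2 w1 w2 !eqxx.
Qed.

Lemma construction_ok : comp_ok (@glg_adj V h f) 1.
Proof.
apply: (comp_ok1_of_clique_cover (C := clique) (rk := rank)).
- move=> y t; rewrite /clique; case code_y: (code y) => [[[x D] w]|]; last by rewrite inE.
  exact: rank_code code_y t.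
- move=> y t1 t2; rewrite /clique; case: (code y) => [[[x D] w]|]; first exact: star_clique.
  by rewrite inE.
- exact: clique_cover.
Qed.

End Construction.

Lemma exists_anchor_edge (V : finType) (h : rel V) (f : V -> nat) :
  symmetric h -> (forall u v, connect h u v) -> (exists u v, h u v) -> (exists v, 0 < f v) ->
  ((exists u v, [/\ h u v, f u = 1 & f v = 1]) \/ (forall v, f v <= 1)) ->
  exists u r, [/\ h u r, f r = 1, f u <= 1 & forall x, 1 < f x -> f u = 1].
Proof.
move=> hsym conn hex [r fr] [[u [r' [hur' fu fr']]]|f_le1].
  by exists u, r'; split; rewrite ?fu.
have [u hru] := connect_has_neighbour conn hex r.
exists u, r; split; first by rewrite hsym.
- by have := f_le1 r; lia.
- exact: f_le1.
- by move=> x; have := f_le1 x; lia.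
Qed.

Theorem theorem2p11 (V : finType) (h : rel V) (f : V -> nat) :
  simple_graph h ->
  (forall u v, connect h u v) ->
  (exists u v, h u v) ->
  (exists v, 0 < f v) ->
  ((exists u v, [/\ h u v, f u = 1 & f v = 1]) \/ (forall v, f v <= 1)) ->
  competition_number_is (@glg_adj V h f) 1.
Proof.
move=> [hsym hirr] conn hex fex weights; split.
  have [u [r [hur fr fu f_big]]] := exists_anchor_edge hsym conn hex fex weights.
  have ur : u != r by apply: contraTneq hur => ->; rewrite hirr.
  have [s [s_uniq s_all s_rooted s_end]] := exists_rooted_order conn hur ur.
  exact: construction_ok hur ur s_uniq s_all s_rooted s_end fr fu f_big.
move=> j; rewrite ltnS leqn0 => /eqP ->.
have [a [b hab]] := hex.
exact: not_comp_ok0 (inl (hedge_of hab)) (glg_no_isolated conn hex fex).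
Qed.
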